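(* Let $X$ be a metric space with bounded geometry. The set of ghost operators in the uniform quasi-local algebra $C^*_{uq}(X)$ is a two-sided closed ideal of $C^*_{uq}(X)$.
   Context: Bounded geometry: $\sup_x|B(x,R)|<\infty$ for all $R>0$. For $T\in\mathfrak B(\ell^2(X))$, $T_{x,y}=\langle T\delta_y,\delta_x\rangle$. $T$ is a ghost operator if for every $\varepsilon>0$ there is a bounded $B\subseteq X$ with $|T_{x,y}|<\varepsilon$ for all $x,y\in X\setminus B$. $T$ is quasi-local if for every $\varepsilon>0$ there is $R>0$ such that $\|\chi_AT\chi_B\|\leq\varepsilon$ for all $A,B\subseteq X$ with $d(A,B)\geq R$ ($\chi_A$ = multiplication by the characteristic function). $C^*_{uq}(X)$ is the $C^*$-algebra of all quasi-local operators on $\ell^2(X)$. *)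

From HB Require Import structures.
From mathcomp Require Import all_boot all_order all_algebra.
From mathcomp Require Import all_classical all_reals.
From mathcomp Require Import ereal esum.
From mathcomp.real_closed Require Import complex.

Set Implicit Arguments.
Unset Strict Implicit.
Unset Printing Implicit Defensive.

Import Order.TTheory GRing.Theory Num.Theory.
Local Open Scope classical_set_scope.
Local Open Scope ring_scope.

Section Defs.
Variable R : realType.
Local Notation C := (R[i])%type.

Definition cabs (z : C) : R := Num.sqrt (complex.Re z ^+ 2 + complex.Im z ^+ 2).

Variable X : choiceType.

Definition is_metric (d : X -> X -> R) : Prop :=
  [/\ forall x y, 0 <= d x y,
      forall x y, d x y = 0 <-> x = y,
      forall x y, d x y = d y x &
      forall x y z, d x z <= d x y + d y z].

Definition bounded_geometry (d : X -> X -> R) : Prop :=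
  forall r : R, exists N : nat, forall (x : X) (s : seq X),
    uniq s -> (forall y, y \in s -> d x y <= r) -> (size s <= N)%N.

Definition bounded_set (d : X -> X -> R) (B : set X) : Prop :=
  exists r : R, forall a b, B a -> B b -> d a b <= r.

Definition sqnorm (f : X -> C) : \bar R :=
  (\esum_(x in [set: X]) ((cabs (f x)) ^+ 2)%:E)%E.
Definition l2 (f : X -> C) : Prop := (sqnorm f < +oo)%E.
Definition l2norm (f : X -> C) : R := Num.sqrt (fine (sqnorm f)).

(* operators on ell^2(X): maps on functions, only their restriction to
   ell^2(X) matters *)
Definition op := (X -> C) -> (X -> C).

Definition bounded_op (T : op) : Prop :=
  [/\ forall f, l2 f -> l2 (T f),
      forall (a : C) f g, l2 f -> l2 g ->
         T (fun x => a * f x + g x) = (fun x => a * T f x + T g x) &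
      exists M : R, forall f, l2 f -> l2norm (T f) <= M * l2norm f].

Definition opnorm (T : op) : R :=
  sup [set l2norm (T f) | f in [set f | l2 f /\ l2norm f <= 1]].

Definition opadd (S T : op) : op := fun f x => S f x + T f x.
Definition opsub (S T : op) : op := fun f x => S f x - T f x.
Definition opscale (a : C) (T : op) : op := fun f x => a * T f x.
Definition opcomp (S T : op) : op := fun f => S (T f).
Definition op0 : op := fun _ _ => 0.

Definition chi (A : set X) : op := fun f x => if `[< A x >] then f x else 0.

Definition delta (y : X) : X -> C := fun x => if x == y then 1 else 0.

(* matrix coefficient T_{x,y} = <T delta_y, delta_x> *)
Definition coef (T : op) (x y : X) : C := T (delta y) x.

Definition ghost (d : X -> X -> R) (T : op) : Prop :=
  forall eps : R, 0 < eps -> exists B : set X, bounded_set d B /\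
    forall x y, ~ B x -> ~ B y -> cabs (coef T x y) < eps.

Definition quasi_local (d : X -> X -> R) (T : op) : Prop :=
  forall eps : R, 0 < eps -> exists r : R, 0 < r /\
    forall A B : set X, (forall a b, A a -> B b -> r <= d a b) ->
      opnorm (opcomp (chi A) (opcomp T (chi B))) <= eps.

Definition in_Cuq (d : X -> X -> R) (T : op) : Prop :=
  bounded_op T /\ quasi_local d T.

Definition ghost_uq (d : X -> X -> R) (T : op) : Prop :=
  in_Cuq d T /\ ghost d T.

End Defs.

(* Sums, scalar multiples and norm limits of ghost operators are ghost by an
   eps/2 argument on matrix coefficients, using |T_{x,y}| <= ||T||.  For a
   product S T with S quasi-local and T ghost, let B be the closed ball of
   radius r around x and split
     (S T)_{x,y} = sum_{z in B} S_{x,z} T_{z,y} + (chi_x S chi_{X\B} T delta_y) x.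
   Choosing r by quasi-locality of S makes the remainder small uniformly in x
   and y.  Bounded geometry bounds the number of terms of the sum by some N(r),
   and each term is below ||S|| eps / N once x and y lie outside the
   r-thickening of a bounded set off which the coefficients of T are below
   eps / N.  T S is treated symmetrically, summing over the ball around y. *)

From HB Require Import structures.
From mathcomp Require Import all_boot all_order all_algebra.
From mathcomp Require Import all_classical all_reals.
From mathcomp Require Import ereal esum.
From mathcomp.real_closed Require Import complex.
From mathcomp Require Import finmap ring lra.
Import Order.TTheory GRing.Theory Num.Theory.
Local Open Scope classical_set_scope.
Local Open Scope ring_scope.

Set Implicit Arguments.
Unset Strict Implicit.
Unset Printing Implicit Defensive.

Section ComplexModulus.
Variable R : realType.
Implicit Types z w : R[i].

Lemma cabsE z : cabs z = Normc.normc z.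
Proof. by case: z. Qed.

Lemma cabs_ge0 z : 0 <= cabs z.
Proof. exact: sqrtr_ge0. Qed.

Lemma cabsD z w : cabs (z + w) <= cabs z + cabs w.
Proof. by rewrite !cabsE; apply: le_normcD. Qed.

Lemma cabsM z w : cabs (z * w) = cabs z * cabs w.
Proof. by rewrite !cabsE; apply: Normc.normcM. Qed.

Lemma cabs0 : cabs (0 : R[i]) = 0.
Proof. by rewrite cabsE Normc.normc0. Qed.

Lemma cabs1 : cabs (1 : R[i]) = 1.
Proof. by rewrite cabsE Normc.normc1. Qed.

Lemma cabs_eq0 z : cabs z = 0 -> z = 0.
Proof. by rewrite cabsE; apply: Normc.eq0_normc. Qed.

Lemma cabs_real (r : R) : cabs (real_complex R r) = `|r|.
Proof. by rewrite /cabs /= expr0n /= addr0 sqrtr_sqr. Qed.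

Lemma cabs_sum_le (T : eqType) (s : seq T) (F : T -> R[i]) (c : R) :
  (forall t, t \in s -> cabs (F t) <= c) ->
  cabs (\sum_(t <- s) F t) <= (size s)%:R * c.
Proof.
elim: s => [|t s IH] Fc; first by rewrite big_nil cabs0 mul0r.
rewrite big_cons /= -nat1r mulrDl mul1r.
apply: le_trans (cabsD _ _) (lerD (Fc _ (mem_head _ _)) (IH _)) => u us.
by apply: Fc; rewrite in_cons us orbT.
Qed.

End ComplexModulus.

Lemma esumZl (R : realType) (T : choiceType) (S : set T) (a : T -> \bar R)
    (c : R) : 0 <= c -> (forall i, (0 <= a i)%E) ->
  (\esum_(i in S) (c%:E * a i) = c%:E * \esum_(i in S) a i)%E.
Proof.
move=> c0 a0; rewrite /esum -ereal_supZl//; last first.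
  by apply/set0P; exists 0%E, set0; rewrite ?fsbig_set0//; exact: fsets_set0.
rewrite image_comp; congr ereal_sup; apply: eq_imagel => A _ /=.
by rewrite ge0_mule_fsumr.
Qed.

Lemma sqrD_le (R : realFieldType) (p q t : R) : 0 < t ->
  (p + q) ^+ 2 <= (1 + t) * p ^+ 2 + (1 + t^-1) * q ^+ 2.
Proof.
move=> t0; rewrite -subr_ge0.
have -> : (1 + t) * p ^+ 2 + (1 + t^-1) * q ^+ 2 - (p + q) ^+ 2 =
    t^-1 * (t * p - q) ^+ 2 by field; rewrite gt_eqF.
by rewrite mulr_ge0 ?sqr_ge0// invr_ge0 ltW.
Qed.

Lemma exists_pos_mul_le (R : realFieldType) (M eps : R) : 0 <= M -> 0 < eps ->
  exists2 e : R, 0 < e & M * e <= eps.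
Proof.
move=> M0 eps0; have M1 : 0 < M + 1 by rewrite ltr_wpDl.
exists (eps / (M + 1)); first by rewrite divr_gt0.
by rewrite mulrCA ger_pMr// ler_pdivrMr// mul1r lerDl.
Qed.

Section L2.
Variables (R : realType) (X : choiceType).
Implicit Types f g : X -> R[i].

Lemma sqnorm_ge0 f : (0 <= sqnorm f)%E.
Proof. by apply: esum_ge0 => x _; rewrite lee_fin sqr_ge0. Qed.

Lemma l2norm_ge0 f : 0 <= l2norm f.
Proof. exact: sqrtr_ge0. Qed.

Lemma sqnormE f : l2 f -> sqnorm f = (l2norm f ^+ 2)%:E.
Proof.
move=> lf; rewrite sqr_sqrtr ?fine_ge0 ?sqnorm_ge0// fineK//.
by rewrite ge0_fin_numE// sqnorm_ge0.
Qed.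

Lemma le_sqnorm f g : (forall x, cabs (f x) <= cabs (g x)) ->
  (sqnorm f <= sqnorm g)%E.
Proof.
move=> fg; apply: le_esum => x _; rewrite lee_fin.
by rewrite lerXn2r ?nnegrE ?cabs_ge0.
Qed.

Lemma l2_le f g : (forall x, cabs (f x) <= cabs (g x)) -> l2 g -> l2 f.
Proof. by move=> fg; apply: le_lt_trans; apply: le_sqnorm. Qed.

Lemma le_l2norm f g : (forall x, cabs (f x) <= cabs (g x)) -> l2 g ->
  l2norm f <= l2norm g.
Proof.
move=> fg lg; rewrite -(@ler_pXn2r _ 2) ?nnegrE ?l2norm_ge0// -lee_fin.
by rewrite -!sqnormE//; [apply: le_sqnorm|apply: l2_le lg].
Qed.

Lemma cabs_le_l2norm f x : l2 f -> cabs (f x) <= l2norm f.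
Proof.
move=> lf; rewrite -(@ler_pXn2r _ 2) ?nnegrE ?cabs_ge0 ?l2norm_ge0//.
rewrite -lee_fin -sqnormE//; apply: esum_ge; exists [set x].
  by split => //; exact: finite_set1.
by rewrite fsbig_set1.
Qed.

Lemma l2norm_eq0 f : l2 f -> l2norm f = 0 -> f = (fun=> 0).
Proof.
move=> lf f0; apply/funext => x; apply: cabs_eq0; apply/eqP.
by rewrite eq_le cabs_ge0 andbT -f0 cabs_le_l2norm.
Qed.

Lemma sqnorm0 : sqnorm (fun _ : X => 0 : R[i]) = 0%E.
Proof. by rewrite /sqnorm esum1// => x _; rewrite cabs0 expr0n. Qed.

Lemma l2_0 : l2 (fun _ : X => 0 : R[i]).
Proof. by rewrite /l2 sqnorm0 ltry. Qed.

Lemma l2norm0 : l2norm (fun _ : X => 0 : R[i]) = 0.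
Proof. by rewrite /l2norm sqnorm0 sqrtr0. Qed.

Lemma sqnormZ (a : R[i]) f :
  sqnorm (fun x => a * f x) = ((cabs a ^+ 2)%:E * sqnorm f)%E.
Proof.
rewrite /sqnorm -esumZl ?sqr_ge0// => [|x]; last by rewrite lee_fin sqr_ge0.
by apply: eq_esum => x _; rewrite cabsM exprMn EFinM.
Qed.

Lemma l2Z (a : R[i]) f : l2 f -> l2 (fun x => a * f x).
Proof. by move=> lf; rewrite /l2 sqnormZ sqnormE// -EFinM ltry. Qed.

Lemma l2normZ (a : R[i]) f : l2 f ->
  l2norm (fun x => a * f x) = cabs a * l2norm f.
Proof.
move=> lf; rewrite [LHS]/l2norm sqnormZ sqnormE// -EFinM /=.
by rewrite sqrtrM ?sqr_ge0// !sqrtr_sqr !ger0_norm ?cabs_ge0 ?l2norm_ge0.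
Qed.

Lemma sqnormD_le f g (t : R) : 0 < t ->
  (sqnorm (fun x => (f x + g x)%R) <=
     (1 + t)%:E * sqnorm f + (1 + t^-1)%:E * sqnorm g)%E.
Proof.
move=> t0; have cabs2_ge0 (z : R[i]) : (0 <= (cabs z ^+ 2)%:E)%E.
  by rewrite lee_fin sqr_ge0.
have t1 : 0 <= 1 + t by rewrite addr_ge0// ltW.
have ti1 : 0 <= 1 + t^-1 by rewrite addr_ge0// invr_ge0 ltW.
rewrite /sqnorm -!esumZl// -esumD => [|x _|x _]; last 2 first.
- by rewrite mule_ge0// lee_fin.
- by rewrite mule_ge0// lee_fin.
apply: le_esum => x _; rewrite -!EFinM -EFinD lee_fin.
apply: le_trans (sqrD_le _ _ t0).
by rewrite lerXn2r ?nnegrE ?addr_ge0 ?cabs_ge0// cabsD.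
Qed.

Lemma l2D f g : l2 f -> l2 g -> l2 (fun x => f x + g x).
Proof.
move=> lf lg; apply: le_lt_trans (sqnormD_le f g ltr01) _.
by rewrite !sqnormE// -!EFinM -EFinD ltry.
Qed.

Lemma l2normD_le f g : l2 f -> l2 g ->
  l2norm (fun x => f x + g x) <= l2norm f + l2norm g.
Proof.
move=> lf lg.
have [f0|nf0] := eqVneq (l2norm f) 0.
  rewrite (l2norm_eq0 lf f0) l2norm0 add0r; apply: le_l2norm lg => x.
  by rewrite add0r.
have [g0|ng0] := eqVneq (l2norm g) 0.
  rewrite (l2norm_eq0 lg g0) l2norm0 addr0; apply: le_l2norm lf => x.
  by rewrite addr0.
have a0 : 0 < l2norm f by rewrite lt_def nf0 l2norm_ge0.
have b0 : 0 < l2norm g by rewrite lt_def ng0 l2norm_ge0.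
(* With [t = |g| / |f|] the bound of [sqnormD_le] is exactly [(|f| + |g|)^2]. *)
have := sqnormD_le f g (divr_gt0 b0 a0).
rewrite (sqnormE (l2D lf lg)) !sqnormE// -!EFinM -EFinD lee_fin.
have -> : (1 + l2norm g / l2norm f) * l2norm f ^+ 2 +
    (1 + (l2norm g / l2norm f)^-1) * l2norm g ^+ 2 = (l2norm f + l2norm g) ^+ 2.
  by rewrite invf_div; field; rewrite !gt_eqF.
by rewrite ler_pXn2r ?nnegrE ?addr_ge0 ?l2norm_ge0.
Qed.

Lemma sqnorm_delta (y : X) : sqnorm (delta R y) = 1%E.
Proof.
rewrite -[RHS](@esum_set1 _ _ y (fun=> 1%E))// esum_mkcond.
apply: eq_esum => x _; rewrite /delta in_set1.
by case: eqP => _; rewrite ?cabs1 ?cabs0 ?expr1n ?expr0n.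
Qed.

Lemma l2_delta (y : X) : l2 (delta R y).
Proof. by rewrite /l2 sqnorm_delta ltry. Qed.

Lemma l2norm_delta (y : X) : l2norm (delta R y) = 1.
Proof. by rewrite /l2norm sqnorm_delta sqrtr1. Qed.

Lemma cabs_chi_le (A : set X) f x : cabs (chi A f x) <= cabs (f x).
Proof. by rewrite /chi; case: ifP; rewrite ?cabs0 ?cabs_ge0. Qed.

Lemma l2_chi (A : set X) f : l2 f -> l2 (chi A f).
Proof. exact/l2_le/cabs_chi_le. Qed.

Lemma l2norm_chi_le (A : set X) f : l2 f -> l2norm (chi A f) <= l2norm f.
Proof. exact/le_l2norm/cabs_chi_le. Qed.

End L2.

Local Notation cut A U B := (opcomp (chi A) (opcomp U (chi B))).

Section Operators.
Variables (R : realType) (X : choiceType).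
Implicit Types (f g : X -> R[i]) (U V W : op R X).

Lemma bounded_op_l2 U f : bounded_op U -> l2 f -> l2 (U f).
Proof. by case=> + _ _; apply. Qed.

Lemma bounded_op_zero U : bounded_op U -> U (fun=> 0) = (fun=> 0).
Proof.
case=> _ lin _; have := lin (-1) _ _ (l2_0 R X) (l2_0 R X).
have -> : (fun x : X => -1 * 0 + 0) = (fun=> 0 : R[i]).
  by apply/funext => x; rewrite mulr0 addr0.
by move->; apply/funext => x; rewrite mulN1r addNr.
Qed.

Lemma bounded_op_additive U f g : bounded_op U -> l2 f -> l2 g ->
  U (fun x => f x + g x) = (fun x => U f x + U g x).
Proof.
case=> _ lin _ lf lg.
have -> : (fun x => f x + g x) = (fun x => 1 * f x + g x).
  by apply/funext => x; rewrite mul1r.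
by rewrite lin//; apply/funext => x; rewrite mul1r.
Qed.

Lemma bounded_op_scalable U (a : R[i]) f : bounded_op U -> l2 f ->
  U (fun x => a * f x) = (fun x => a * U f x).
Proof.
move=> bU lf; have [_ lin _] := bU; have := lin a f _ lf (l2_0 R X).
have -> : (fun x => a * f x + 0) = (fun x => a * f x).
  by apply/funext => x; rewrite addr0.
by move->; apply/funext => x; rewrite (bounded_op_zero bU) addr0.
Qed.

Lemma bounded_op_chi_split U (A : set X) f : bounded_op U -> l2 f ->
  U f = (fun x => U (chi A f) x + U (chi (~` A) f) x).
Proof.
move=> bU lf; rewrite -(bounded_op_additive bU (l2_chi A lf) (l2_chi _ lf)).
congr U; apply/funext => x; rewrite /chi.
have [Ax|nAx] := pselect (A x).
  by rewrite (asboolT Ax) asboolF ?addr0.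
by rewrite asboolF// asboolT// add0r.
Qed.

Lemma opnorm_le U (M : R) :
  (forall f, l2 f -> l2norm f <= 1 -> l2norm (U f) <= M) -> opnorm U <= M.
Proof.
move=> UM; apply: ge_sup => [|_ [f [lf nf] <-]]; last exact: UM.
exists (l2norm (U (fun=> 0))), (fun=> 0) => //.
by split; [exact: l2_0|rewrite l2norm0].
Qed.

Lemma l2norm_le_opnorm U f : bounded_op U -> l2 f -> l2norm f <= 1 ->
  l2norm (U f) <= opnorm U.
Proof.
case=> _ _ [M UM] lf nf; apply: ub_le_sup; last by exists f.
exists `|M| => _ [g [lg ng] <-]; apply: le_trans (UM g lg) _.
apply: (@le_trans _ _ (`|M| * l2norm g)).
  by rewrite ler_wpM2r ?l2norm_ge0 ?ler_norm.
by rewrite ler_piMr.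
Qed.

Lemma opnorm_ge0 U : bounded_op U -> 0 <= opnorm U.
Proof.
move=> bU; apply: le_trans (l2norm_le_opnorm bU (l2_0 R X) _).
  exact: l2norm_ge0.
by rewrite l2norm0.
Qed.

Lemma l2norm_op_le U f : bounded_op U -> l2 f ->
  l2norm (U f) <= opnorm U * l2norm f.
Proof.
move=> bU lf; have [f0|nf0] := eqVneq (l2norm f) 0.
  by rewrite (l2norm_eq0 lf f0) (bounded_op_zero bU) l2norm0 mulr0.
have n0 : 0 < l2norm f by rewrite lt_def nf0 l2norm_ge0.
have := l2norm_le_opnorm bU (l2Z (real_complex R (l2norm f)^-1) lf).
rewrite (bounded_op_scalable _ bU lf) (l2normZ _ lf).
rewrite (l2normZ _ (bounded_op_l2 bU lf)).
rewrite cabs_real ger0_norm ?invr_ge0 ?l2norm_ge0// mulVf//.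
by rewrite ler_pdivrMl// mulrC => /(_ (lexx _)).
Qed.

Lemma cabs_op_le U f x : bounded_op U -> l2 f ->
  cabs (U f x) <= opnorm U * l2norm f.
Proof.
move=> bU lf; apply: le_trans (l2norm_op_le bU lf).
exact/cabs_le_l2norm/bounded_op_l2.
Qed.

Lemma l2norm_op_delta_le U y : bounded_op U ->
  l2norm (U (delta R y)) <= opnorm U.
Proof.
by move=> bU; apply: l2norm_le_opnorm (l2_delta R y) _; rewrite ?l2norm_delta.
Qed.

Lemma cabs_coef_le U x y : bounded_op U -> cabs (coef U x y) <= opnorm U.
Proof.
move=> bU; apply: le_trans (l2norm_op_delta_le y bU).
exact: cabs_le_l2norm x (bounded_op_l2 bU (l2_delta R y)).
Qed.

Lemma eq_opnorm U V : (forall f, l2 f -> U f = V f) -> opnorm U = opnorm V.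
Proof.
move=> UV; rewrite /opnorm; congr sup; apply/seteqP.
by split=> _ [f [lf nf] <-]; exists f; rewrite ?UV.
Qed.

Lemma bounded_op0 : bounded_op (@op0 R X).
Proof.
split=> [f _|a f g _ _|]; first exact: l2_0.
  by apply/funext => x; rewrite /op0 mulr0 addr0.
by exists 0 => f _; rewrite /op0 l2norm0 mul0r.
Qed.

Lemma bounded_op_chi (A : set X) : bounded_op (chi (R:=R) A).
Proof.
split=> [f|a f g _ _|]; first exact: l2_chi.
  by apply/funext => x; rewrite /chi; case: ifP; rewrite ?mulr0 ?addr0.
by exists 1 => f lf; rewrite mul1r l2norm_chi_le.
Qed.

Lemma bounded_op_comp U V : bounded_op U -> bounded_op V ->
  bounded_op (opcomp U V).
Proof.
move=> bU bV; split=> [f lf|a f g lf lg|].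
- exact/(bounded_op_l2 bU)/(bounded_op_l2 bV).
- have [_ linU _] := bU; have [_ linV _] := bV.
  by rewrite /opcomp linV// linU//; apply: bounded_op_l2.
exists (opnorm U * opnorm V) => f lf; rewrite -mulrA.
apply: le_trans (l2norm_op_le bU (bounded_op_l2 bV lf)) _.
by rewrite ler_wpM2l ?opnorm_ge0// l2norm_op_le.
Qed.

Lemma bounded_opD U V : bounded_op U -> bounded_op V ->
  bounded_op (opadd U V).
Proof.
move=> bU bV; split=> [f lf|a f g lf lg|].
- by apply: l2D; apply: bounded_op_l2.
- have [_ linU _] := bU; have [_ linV _] := bV.
  rewrite /opadd linU// linV//; apply/funext => x.
  by rewrite mulrDr addrACA.
exists (opnorm U + opnorm V) => f lf; rewrite mulrDl.
apply: le_trans (l2normD_le (bounded_op_l2 bU lf) (bounded_op_l2 bV lf)) _.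
by apply: lerD; apply: l2norm_op_le.
Qed.

Lemma bounded_opZ (a : R[i]) U : bounded_op U -> bounded_op (opscale a U).
Proof.
move=> bU; split=> [f lf|b f g lf lg|].
- exact/l2Z/(bounded_op_l2 bU).
- have [_ linU _] := bU; rewrite /opscale linU//; apply/funext => x.
  by rewrite mulrDr mulrCA.
exists (cabs a * opnorm U) => f lf.
rewrite /opscale (l2normZ _ (bounded_op_l2 bU lf)) -mulrA.
by rewrite ler_wpM2l ?cabs_ge0// l2norm_op_le.
Qed.

Lemma bounded_opB U V : bounded_op U -> bounded_op V ->
  bounded_op (opsub U V).
Proof.
move=> bU bV; have -> : opsub U V = opadd U (opscale (-1) V).
  by apply/funext => f; apply/funext => x; rewrite /opadd /opscale mulN1r.
exact/bounded_opD/bounded_opZ.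
Qed.

Lemma bounded_op_cut (A B : set X) U : bounded_op U -> bounded_op (cut A U B).
Proof.
by move=> bU; do 2?apply: bounded_op_comp => //; exact: bounded_op_chi.
Qed.

Lemma opnorm_comp_le U V : bounded_op U -> bounded_op V ->
  opnorm (opcomp U V) <= opnorm U * opnorm V.
Proof.
move=> bU bV; apply: opnorm_le => f lf nf.
apply: le_trans (l2norm_op_le bU (bounded_op_l2 bV lf)) _.
by rewrite ler_wpM2l ?opnorm_ge0// l2norm_le_opnorm.
Qed.

Lemma opnormD_le U V : bounded_op U -> bounded_op V ->
  opnorm (opadd U V) <= opnorm U + opnorm V.
Proof.
move=> bU bV; apply: opnorm_le => f lf nf.
apply: le_trans (l2normD_le (bounded_op_l2 bU lf) (bounded_op_l2 bV lf)) _.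
by apply: lerD; apply: l2norm_le_opnorm.
Qed.

Lemma opnormZ_le (a : R[i]) U : bounded_op U ->
  opnorm (opscale a U) <= cabs a * opnorm U.
Proof.
move=> bU; apply: opnorm_le => f lf nf.
rewrite /opscale (l2normZ _ (bounded_op_l2 bU lf)).
by rewrite ler_wpM2l ?cabs_ge0// l2norm_le_opnorm.
Qed.

Lemma opnorm_chi_le (A : set X) : opnorm (chi (R:=R) A) <= 1.
Proof. by apply: opnorm_le => f lf; apply: le_trans (l2norm_chi_le A lf). Qed.

Lemma opnorm_comp_chi_le U (A : set X) : bounded_op U ->
  opnorm (opcomp U (chi A)) <= opnorm U.
Proof.
move=> bU; apply: le_trans (opnorm_comp_le bU (bounded_op_chi A)) _.
by rewrite ler_piMr ?opnorm_ge0 ?opnorm_chi_le.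
Qed.

Lemma opnorm_chi_comp_le (A : set X) U : bounded_op U ->
  opnorm (opcomp (chi A) U) <= opnorm U.
Proof.
move=> bU; apply: le_trans (opnorm_comp_le (bounded_op_chi A) bU) _.
by rewrite ler_piMl ?opnorm_ge0 ?opnorm_chi_le.
Qed.

Lemma chi_delta (y : X) : chi [set y] (delta R y) = delta R y.
Proof.
apply/funext => w; rewrite /chi /delta.
have [->|wy] := eqVneq w y; first by rewrite asboolT.
by rewrite asboolF ?(negbTE wy)//; apply/eqP.
Qed.

Lemma bounded_op_chi_seq U g x (s : seq X) : bounded_op U -> l2 g -> uniq s ->
  U (chi [set z | z \in s] g) x = \sum_(z <- s) g z * coef U x z.
Proof.
move=> bU lg; elim: s => [_|z s IH /andP[zs us]].
  have -> : chi [set z | z \in [::]] g = (fun=> 0).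
    by apply/funext => w; rewrite /chi asboolF.
  by rewrite (bounded_op_zero bU) big_nil.
have -> : chi [set w | w \in z :: s] g =
    (fun w => g z * delta R z w + chi [set w | w \in s] g w).
  apply/funext => w; rewrite /chi /delta !asboolb in_cons.
  by case: eqP => [->|_]; rewrite ?(negbTE zs) ?mulr1 ?addr0 ?mulr0 ?add0r.
have [_ lin _] := bU; rewrite lin; [|exact: l2_delta|exact: l2_chi].
by rewrite big_cons IH.
Qed.

(* The product formula [(U V)_{x,y} = sum_z U_{x,z} V_{z,y}] truncated to the
   window [s]; the last term is the remainder. *)
Lemma cabs_coef_comp_le U V x y (s : seq X) (N : nat) (a b : R) :
  bounded_op U -> bounded_op V -> uniq s -> (size s <= N)%N -> 0 <= a ->
  (forall z, z \in s -> cabs (coef V z y) * cabs (coef U x z) <= a) ->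
  cabs (U (chi (~` [set z | z \in s]) (V (delta R y))) x) <= b ->
  cabs (coef (opcomp U V) x y) <= N%:R * a + b.
Proof.
move=> bU bV us sN a0 near far; have lVy := bounded_op_l2 bV (l2_delta R y).
rewrite /coef /opcomp (bounded_op_chi_split [set z | z \in s] bU lVy).
apply: le_trans (cabsD _ _) (lerD _ far); rewrite bounded_op_chi_seq//.
apply: le_trans (cabs_sum_le (c := a) _) _ => [z zs|].
  by rewrite cabsM near.
by rewrite ler_wpM2r// ler_nat.
Qed.

Lemma cut_op0 (A B : set X) : cut A (@op0 R X) B = @op0 R X.
Proof.
by apply/funext => f; apply/funext => x; rewrite /opcomp /chi /op0; case: ifP.
Qed.

Lemma cutD (A B : set X) U V :
  cut A (opadd U V) B = opadd (cut A U B) (cut A V B).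
Proof.
apply/funext => f; apply/funext => x; rewrite /opcomp /opadd /chi.
by case: ifP; rewrite ?addr0.
Qed.

Lemma cutZ (A B : set X) (a : R[i]) U :
  cut A (opscale a U) B = opscale a (cut A U B).
Proof.
apply/funext => f; apply/funext => x; rewrite /opcomp /opscale /chi.
by case: ifP; rewrite ?mulr0.
Qed.

Lemma cut_comp_split (A B N : set X) U V : bounded_op U -> bounded_op V ->
  forall f, l2 f -> cut A (opcomp U V) B f =
    opadd (opcomp (cut A U N) (opcomp V (chi B)))
          (opcomp (opcomp (chi A) U) (cut (~` N) V B)) f.
Proof.
move=> bU bV f lf; rewrite /opadd /opcomp.
rewrite (bounded_op_chi_split N bU (bounded_op_l2 bV (l2_chi B lf))).
by apply/funext => x; rewrite /chi; case: ifP; rewrite ?addr0.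
Qed.

End Operators.

Arguments bounded_op_chi {R X}.

Section QuasiLocal.
Variables (R : realType) (X : choiceType) (d : X -> X -> R).
Implicit Types (U V : op R X).

Lemma quasi_local0 : quasi_local d (@op0 R X).
Proof.
move=> eps eps0; exists 1; split=> // A B _; rewrite cut_op0.
by apply: opnorm_le => f _ _; rewrite l2norm0 ltW.
Qed.

Lemma quasi_localD U V : bounded_op U -> bounded_op V ->
  quasi_local d U -> quasi_local d V -> quasi_local d (opadd U V).
Proof.
move=> bU bV qU qV eps eps0; have eps20 : 0 < eps / 2 by rewrite divr_gt0.
have [r1 [r10 hr1]] := qU _ eps20; have [r2 [r20 hr2]] := qV _ eps20.
exists (Num.max r1 r2); split=> [|A B dAB]; first by rewrite lt_max r10.
rewrite cutD.
apply: le_trans (opnormD_le (bounded_op_cut A B bU) (bounded_op_cut A B bV)) _.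
rewrite [leRHS]splitr; apply: lerD; [apply: hr1|apply: hr2] => a b Aa Bb;
  by apply: le_trans (dAB a b Aa Bb); rewrite le_max lexx ?orbT.
Qed.

Lemma quasi_localZ (a : R[i]) U : bounded_op U -> quasi_local d U ->
  quasi_local d (opscale a U).
Proof.
move=> bU qU eps eps0; have [e e0 ae] := exists_pos_mul_le (cabs_ge0 a) eps0.
have [r [r0 hr]] := qU _ e0; exists r; split=> // A B dAB.
rewrite cutZ.
apply: le_trans (opnormZ_le a (bounded_op_cut A B bU)) (le_trans _ ae).
by rewrite ler_wpM2l ?cabs_ge0 ?hr.
Qed.

Hypothesis hd : is_metric d.

(* [chi_A U V chi_B] splits through the [r2]-neighbourhood [N] of [B]: the part
   through [N] is small by locality of [U], the part through its complement by
   locality of [V]. *)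
Lemma quasi_local_comp U V : bounded_op U -> bounded_op V ->
  quasi_local d U -> quasi_local d V -> quasi_local d (opcomp U V).
Proof.
move=> bU bV qU qV eps eps0; have eps20 : 0 < eps / 2 by rewrite divr_gt0.
have [e1 e10 Ve1] := exists_pos_mul_le (opnorm_ge0 bV) eps20.
have [e2 e20 Ue2] := exists_pos_mul_le (opnorm_ge0 bU) eps20.
have [r1 [r10 hr1]] := qU _ e10; have [r2 [r20 hr2]] := qV _ e20.
exists (r1 + r2); split=> [|A B dAB]; first by rewrite addr_gt0.
pose N := [set z | exists2 b, B b & d z b < r2].
have [_ _ _ d_tri] := hd.
have UN : opnorm (cut A U N) <= e1.
  apply: hr1 => a z Aa [b Bb dzb]; rewrite -(lerD2r r2).
  apply: le_trans (dAB a b Aa Bb) (le_trans (d_tri a z b) _).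
  by rewrite lerD2l ltW.
have VN : opnorm (cut (~` N) V B) <= e2.
  apply: hr2 => z b nNz Bb; rewrite leNgt.
  by apply: contra_notN nNz => ?; exists b.
rewrite (eq_opnorm (cut_comp_split A B N bU bV)).
have bP1 := bounded_op_cut A N bU.
have bP2 := bounded_op_comp bV (bounded_op_chi B).
have bQ1 := bounded_op_comp (bounded_op_chi A) bU.
have bQ2 := bounded_op_cut (~` N) B bV.
have bP := bounded_op_comp bP1 bP2; have bQ := bounded_op_comp bQ1 bQ2.
apply: le_trans (opnormD_le bP bQ) _.
rewrite [leRHS]splitr; apply: lerD.
- rewrite mulrC in Ve1.
  apply: le_trans (opnorm_comp_le bP1 bP2) (le_trans _ Ve1).
  by apply: ler_pM; rewrite ?opnorm_ge0 ?opnorm_comp_chi_le.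
- apply: le_trans (opnorm_comp_le bQ1 bQ2) (le_trans _ Ue2).
  by apply: ler_pM; rewrite ?opnorm_ge0 ?opnorm_chi_comp_le.
Qed.
End QuasiLocal.

Section Ghost.
Variables (R : realType) (X : choiceType) (d : X -> X -> R).
Hypothesis hd : is_metric d.
Implicit Types (U V : op R X) (B : set X).

Definition thicken B (r : R) := [set w | exists2 b, B b & d w b <= r].

Let d_xx x : d x x = 0. Proof. by have [_ dP _ _] := hd; apply/dP. Qed.
Let d_sym x y : d x y = d y x. Proof. by case: hd. Qed.
Let d_tri x y z : d x z <= d x y + d y z. Proof. by case: hd. Qed.

Lemma sub_thicken B r : 0 <= r -> B `<=` thicken B r.
Proof. by move=> r0 b Bb; exists b; rewrite ?d_xx. Qed.

Lemma bounded_set_thicken B r : bounded_set d B -> bounded_set d (thicken B r).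
Proof.
move=> [rB hB]; exists (r + rB + r) => a b [a' Ba' da] [b' Bb' db].
apply: le_trans (d_tri a a' b) _; rewrite -addrA; apply: lerD => //.
apply: le_trans (d_tri a' b' b) _.
by apply: lerD; [exact: hB|rewrite d_sym].
Qed.

Lemma bounded_setU B1 B2 : bounded_set d B1 -> bounded_set d B2 ->
  bounded_set d (B1 `|` B2).
Proof.
move=> [r1 h1] [r2 h2].
have [->|/set0P[a0 B1a0]] := eqVneq B1 set0; first by rewrite set0U; exists r2.
have [->|/set0P[b0 B2b0]] := eqVneq B2 set0; first by rewrite setU0; exists r1.
pose c := r1 + r2 + d a0 b0.
suff near_a0 w : (B1 `|` B2) w -> d w a0 <= c.
  exists (c + c) => a b /near_a0 ha /near_a0 hb.
  by apply: le_trans (d_tri a a0 b) _; rewrite lerD// d_sym.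
have r10 : 0 <= r1 by rewrite -(d_xx a0) h1.
have r20 : 0 <= r2 by rewrite -(d_xx b0) h2.
have d0 : 0 <= d a0 b0 by case: hd.
case=> [B1w|B2w]; first by have := h1 _ _ B1w B1a0; rewrite /c; lra.
have := d_tri w b0 a0; have := h2 _ _ B2w B2b0; rewrite /c (d_sym b0); lra.
Qed.
Lemma ghost_le U : (forall eps, 0 < eps -> exists B, bounded_set d B /\
    forall x y, ~ B x -> ~ B y -> cabs (coef U x y) <= eps) -> ghost d U.
Proof.
move=> gU eps eps0; have [B [bB hB]] := gU _ (divr_gt0 eps0 (ltr0Sn _ 1)).
exists B; split=> // x y Bx By; apply: le_lt_trans (hB x y Bx By) _.
by rewrite ltr_pdivrMr// ltr_pMr// ltr1n.
Qed.

Lemma ghost0 : ghost d (@op0 R X).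
Proof.
move=> eps eps0; exists set0; split=> [|x y _ _]; first by exists 0.
by rewrite /coef /op0 cabs0.
Qed.

Lemma ghostD U V : ghost d U -> ghost d V -> ghost d (opadd U V).
Proof.
move=> gU gV; apply: ghost_le => eps eps0.
have eps20 : 0 < eps / 2 by rewrite divr_gt0.
have [B1 [bB1 hB1]] := gU _ eps20; have [B2 [bB2 hB2]] := gV _ eps20.
exists (B1 `|` B2); split=> [|x y Bx By]; first exact: bounded_setU.
rewrite [leRHS]splitr; apply: le_trans (cabsD _ _) (lerD _ _); apply/ltW.
  by apply: hB1 => ?; [apply: Bx|apply: By]; left.
by apply: hB2 => ?; [apply: Bx|apply: By]; right.
Qed.

Lemma ghostZ (a : R[i]) U : ghost d U -> ghost d (opscale a U).
Proof.
move=> gU; apply: ghost_le => eps eps0.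
have [e e0 ae] := exists_pos_mul_le (cabs_ge0 a) eps0.
have [B [bB hB]] := gU _ e0; exists B; split=> // x y Bx By.
rewrite /coef /opscale cabsM; apply: le_trans ae.
by rewrite ler_wpM2l ?cabs_ge0// ltW// hB.
Qed.

Lemma ghost_closed U : bounded_op U ->
  (forall eps, 0 < eps ->
     exists V, ghost_uq d V /\ opnorm (opsub U V) <= eps) ->
  ghost d U.
Proof.
move=> bU approx; apply: ghost_le => eps eps0.
have eps20 : 0 < eps / 2 by rewrite divr_gt0.
have [V [[[bV _] gV] UV]] := approx _ eps20; have [B [bB hB]] := gV _ eps20.
exists B; split=> // x y Bx By.
have -> : coef U x y = coef (opsub U V) x y + coef V x y.
  by rewrite /coef /opsub subrK.
rewrite [leRHS]splitr.
apply: le_trans (cabsD _ _) (lerD _ (ltW (hB x y Bx By))).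
exact: le_trans (cabs_coef_le x y (bounded_opB bU bV)) UV.
Qed.

Hypothesis hbg : bounded_geometry d.

Lemma ball_seq (r : R) : exists N : nat, forall x, exists s : seq X,
  [/\ uniq s, forall z, z \in s <-> d x z <= r & (size s <= N)%N].
Proof.
have [N hN] := hbg r; exists N => x.
have : finite_set [set z | d x z <= r].
  apply: contrapT => /(infinite_set_fset N.+1)[B Br NB].
  by have := hN x B (fset_uniq B) (fun z zB => Br z zB); rewrite leqNgt NB.
move/finite_seqP => [s sE]; have ballE z : (z \in s) <-> d x z <= r.
  by move: sE => /(congr1 (@^~ z)) /= ->.
exists (undup s); split=> [|z|]; first exact: undup_uniq.
  by rewrite mem_undup.
by apply: (hN x _ (undup_uniq s)) => z; rewrite mem_undup => /ballE.
Qed.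

Lemma ghost_compl U V : bounded_op U -> ghost d U ->
  bounded_op V -> quasi_local d V -> ghost d (opcomp U V).
Proof.
move=> bU gU bV qV; apply: ghost_le => eps eps0.
have eps20 : 0 < eps / 2 by rewrite divr_gt0.
have [e1 e10 Ue1] := exists_pos_mul_le (opnorm_ge0 bU) eps20.
have [r [r0 hr]] := qV _ e10; have [N hN] := ball_seq r.
have NV0 : 0 <= N%:R * opnorm V by rewrite mulr_ge0 ?opnorm_ge0.
have [e2 e20 NVe2] := exists_pos_mul_le NV0 eps20.
have [BU [bBU hBU]] := gU _ e20.
exists (thicken BU r); split=> [|x y Bx By]; first exact: bounded_set_thicken.
have [s [us sE sN]] := hN y; rewrite -mulrA in NVe2.
apply: le_trans (cabs_coef_comp_le (a := opnorm V * e2) bU bV us sN _ _ _) _.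
- by rewrite mulr_ge0 ?opnorm_ge0 ?ltW.
- move=> z /sE dyz; rewrite ler_pM ?cabs_ge0 ?cabs_coef_le//.
  apply/ltW; apply: hBU => [BUx|BUz]; first exact/Bx/(sub_thicken (ltW r0)).
  by apply: By; exists z.
- pose W := cut (~` [set z | z \in s]) V [set y].
  have bW : bounded_op W := bounded_op_cut _ _ bV.
  have -> : chi (~` [set z | z \in s]) (V (delta R y)) = W (delta R y).
    by rewrite /W /opcomp chi_delta.
  have W_small : opnorm W <= e1.
    apply: hr => z _ /= zs ->; rewrite d_sym leNgt.
    by apply/negP => /ltW /sE.
  have lWy := bounded_op_l2 bW (l2_delta R y).
  apply: le_trans (cabs_op_le x bU lWy) (le_trans _ Ue1).
  by rewrite ler_wpM2l ?opnorm_ge0// (le_trans (l2norm_op_delta_le y bW)).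
- by rewrite [leRHS]splitr; apply: lerD.
Qed.

Lemma ghost_compr U V : bounded_op U -> quasi_local d U ->
  bounded_op V -> ghost d V -> ghost d (opcomp U V).
Proof.
move=> bU qU bV gV; apply: ghost_le => eps eps0.
have eps20 : 0 < eps / 2 by rewrite divr_gt0.
have [e1 e10 Ve1] := exists_pos_mul_le (opnorm_ge0 bV) eps20.
have [r [r0 hr]] := qU _ e10; have [N hN] := ball_seq r.
have NU0 : 0 <= N%:R * opnorm U by rewrite mulr_ge0 ?opnorm_ge0.
have [e2 e20 NUe2] := exists_pos_mul_le NU0 eps20.
have [BV [bBV hBV]] := gV _ e20.
exists (thicken BV r); split=> [|x y Bx By]; first exact: bounded_set_thicken.
have [s [us sE sN]] := hN x; rewrite -mulrA in NUe2.
apply: le_trans (cabs_coef_comp_le (a := e2 * opnorm U) bU bV us sN _ _ _) _.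
- by rewrite mulr_ge0 ?opnorm_ge0 ?ltW.
- move=> z /sE dxz; rewrite ler_pM ?cabs_ge0 ?cabs_coef_le//.
  apply/ltW; apply: hBV => [BVz|BVy]; first by apply: Bx; exists z.
  exact/By/(sub_thicken (ltW r0)).
- pose W := cut [set x] U (~` [set z | z \in s]).
  have bW : bounded_op W := bounded_op_cut _ _ bU.
  have -> : U (chi (~` [set z | z \in s]) (V (delta R y))) x =
      W (V (delta R y)) x.
    by rewrite /W /opcomp /chi asboolT.
  have W_small : opnorm W <= e1.
    apply: hr => a z -> /= zs; rewrite leNgt.
    by apply/negP => /ltW /sE.
  apply: le_trans (cabs_op_le x bW (bounded_op_l2 bV (l2_delta R y))) _.
  rewrite mulrC; apply: le_trans Ve1.
  by apply: ler_pM; rewrite ?l2norm_ge0 ?opnorm_ge0 ?l2norm_op_delta_le.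
- by rewrite [leRHS]splitr [e2 * _]mulrC; apply: lerD.
Qed.

End Ghost.

Theorem lemma5p4 (R : realType) (X : choiceType) (d : X -> X -> R)
  (hd : is_metric d) (hbg : bounded_geometry d) :
  [/\ ghost_uq d (@op0 R X),
      forall S T, ghost_uq d S -> ghost_uq d T -> ghost_uq d (opadd S T),
      forall (a : R[i]) T, ghost_uq d T -> ghost_uq d (opscale a T),
      forall S T, in_Cuq d S -> ghost_uq d T ->
        ghost_uq d (opcomp S T) /\ ghost_uq d (opcomp T S) &
      forall T, in_Cuq d T ->
        (forall eps : R, 0 < eps ->
           exists S, ghost_uq d S /\ opnorm (opsub T S) <= eps) ->
        ghost_uq d T].
Proof.
split.
- by split; [split; [exact: bounded_op0|exact: quasi_local0]|exact: ghost0].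
- move=> S T [[bS qS] gS] [[bT qT] gT].
  by split; [split; [exact: bounded_opD|exact: quasi_localD]|exact: ghostD].
- move=> a T [[bT qT] gT].
  by split; [split; [exact: bounded_opZ|exact: quasi_localZ]|exact: ghostZ].
- move=> S T [bS qS] [[bT qT] gT].
  have bST := bounded_op_comp bS bT; have bTS := bounded_op_comp bT bS.
  have qST := quasi_local_comp hd bS bT qS qT.
  have qTS := quasi_local_comp hd bT bS qT qS.
  by split; split=> //; [exact: ghost_compr|exact: ghost_compl].
- by move=> T [bT qT] approx; split=> //; exact: ghost_closed.
Qed.
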